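(* Let $\epsilon\in(0,1)$ and $x\in[0,1/2)$, and consider the iterated map $p\mapsto 2p^2(1-\epsilon)^2+4px\epsilon(1-\epsilon)+2x^2\epsilon^2$. For every initial value $p\in[0,1/2]$, the iterates converge to the fixed point $$p^*=\frac{1-4x\epsilon(1-\epsilon)-\sqrt{1-8\epsilon x(1-\epsilon)}}{4(1-\epsilon)^2},$$ and $p^*\le\epsilon$. *)

From HB Require Import structures.
From mathcomp Require Import all_boot all_order all_algebra.
From mathcomp Require Import all_classical all_reals.
From mathcomp Require Import topology normedtype sequences.
Set Implicit Arguments. Unset Strict Implicit. Unset Printing Implicit Defensive.
Import Order.TTheory GRing.Theory Num.Theory.
Local Open Scope ring_scope.

Definition selfmap {R : realType} (e x : R) (p : R) : R :=
  2 * p ^+ 2 * (1 - e) ^+ 2 + 4 * p * x * e * (1 - e) + 2 * x ^+ 2 * e ^+ 2.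

Definition pstar {R : realType} (e x : R) : R :=
  (1 - 4 * x * e * (1 - e) - Num.sqrt (1 - 8 * e * x * (1 - e)))
  / (4 * (1 - e) ^+ 2).

From mathcomp Require Import all_boot all_order all_algebra.
From mathcomp Require Import all_classical all_reals.
From mathcomp Require Import topology normedtype sequences.
From mathcomp Require Import ring lra.
Import Order.TTheory GRing.Theory Num.Theory.
Import numFieldNormedType.Exports.
Local Open Scope classical_set_scope.
Local Open Scope ring_scope.

(* Write the map as f p = 2 (a p + b)^2 with a = 1 - e and b = x e.  Its smaller
   fixed point P satisfies P = 2 q^2 with q = a P + b, so
   f p - P = (p - P) * 2 a (a p + b + q): the secant slope towards P is affine and
   increasing in p.  On [0, 1/2] it is nonnegative, and it is below 1 at p = 1/2
   because f (1/2) < 1/2, which is where x < 1/2 enters.  Hence f maps [0, 1/2]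
   into itself and contracts towards P, so the iterates converge geometrically.
   The same factorisation shows that P lies below every y with f y <= y, and
   f e <= e because 2 e (1 - e + x)^2 <= 2 e (3/2 - e)^2 <= 1. *)

Section Contraction.
Context {R : realType} {f : R -> R} {A : set R} {l c : R}.
Hypotheses (c_ge0 : 0 <= c) (c_lt1 : c < 1).
Hypotheses (f_stable : forall y, A y -> A (f y))
  (f_contract : forall y, A y -> `|f y - l| <= c * `|y - l|).

Lemma dist_iter_le p : A p -> forall n, `|iter n f p - l| <= c ^+ n * `|p - l|.
Proof.
move=> Ap; have Aiter n : A (iter n f p) by elim: n => //= n; exact: f_stable.
elim=> [|n IHn] /=; first by rewrite expr0 mul1r.
rewrite exprS -mulrA (le_trans (f_contract _ (Aiter n)) _) //.
by rewrite ler_wpM2l.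
Qed.

Lemma iter_contract_cvg p : A p -> iter n f p @[n --> \oo] --> l.
Proof.
move=> Ap; apply/subr_cvg0/norm_cvg0P.
have geo0 : geometric `|p - l| c n @[n --> \oo] --> 0.
  by apply: cvg_geometric; rewrite ger0_norm.
apply: (@squeeze_cvgr _ _ _ _ (fun=> 0) (geometric `|p - l| c)).
- by near=> n; rewrite normr_ge0 /geometric /= mulrC dist_iter_le.
- exact: cvg_cst.
- exact: geo0.
Unshelve. all: by end_near.
Qed.

End Contraction.

Definition quadmap {R : rcfType} (a b p : R) : R := 2 * (a * p + b) ^+ 2.

Definition quadfix {R : rcfType} (a b : R) : R :=
  (1 - 4 * a * b - Num.sqrt (1 - 8 * a * b)) / (4 * a ^+ 2).

Section QuadraticMap.
Context {R : rcfType} {a b : R}.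
(* [lra] and [nra] ignore section hypotheses; they are moved to the goal where needed. *)
Hypotheses (a_gt0 : 0 < a) (b_ge0 : 0 <= b) (a2b_lt1 : a + 2 * b < 1).

Local Notation f := (quadmap a b).
Local Notation P := (quadfix a b).
Let s := Num.sqrt (1 - 8 * a * b).
Let q := a * P + b.
Let slope p := 2 * a * (a * p + b + q).

Lemma quadmap_discr_gt0 : 0 < 1 - 8 * a * b.
Proof.
have amgm : 8 * a * b <= (a + 2 * b) ^+ 2.
  by rewrite -subr_ge0 (_ : _ - _ = (a - 2 * b) ^+ 2) ?sqr_ge0 //; ring.
have : (a + 2 * b) ^+ 2 < 1.
  by rewrite exprn_ilt1 //; move: a_gt0 b_ge0 a2b_lt1; lra.
lra.
Qed.

Let a_neq0 : a != 0. Proof. by rewrite gt_eqF. Qed.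

Lemma quadfix_shift : 4 * a * q = 1 - s.
Proof. by rewrite /q /quadfix -/s; field. Qed.

Lemma quadmap_quadfix : f P = P.
Proof.
have s2 : s ^+ 2 = 1 - 8 * a * b by rewrite /s sqr_sqrtr // ltW // quadmap_discr_gt0.
have P_eq : 4 * a ^+ 2 * P = 1 - 4 * a * b - s by rewrite /quadfix -/s; field.
apply: (@mulfI _ (8 * a ^+ 2)); first by rewrite mulf_neq0 ?expf_neq0 ?pnatr_eq0.
rewrite /quadmap -/q (_ : _ * (2 * _) = (4 * a * q) ^+ 2); last by ring.
rewrite (_ : _ * P = 2 * (4 * a ^+ 2 * P)); last by ring.
rewrite quadfix_shift P_eq; move: s2; lra.
Qed.

Lemma quadmap_sub_quadfix p : f p - P = (p - P) * slope p.
Proof. by rewrite -{1}quadmap_quadfix /quadmap /slope /q; ring. Qed.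

Let q_ge0 : 0 <= q.
Proof.
have s_le1 : s <= 1.
  by rewrite /s -[leRHS]sqrtr1 ler_wsqrtr // gerBl !mulr_ge0 // ltW.
have : 0 <= 4 * a * q by rewrite quadfix_shift subr_ge0.
by rewrite pmulr_rge0 // mulr_gt0.
Qed.

Let affine_ge0 p : 0 <= p -> 0 <= a * p + b.
Proof. by move=> p_ge0; rewrite addr_ge0 // mulr_ge0 // ltW. Qed.

Lemma slope_ge0 p : 0 <= p -> 0 <= slope p.
Proof.
by move=> p_ge0; rewrite /slope pmulr_rge0 ?mulr_gt0 // addr_ge0 ?(affine_ge0 _ p_ge0).
Qed.

Lemma slope_le p p' : p <= p' -> slope p <= slope p'.
Proof.
move=> le_pp'; rewrite -subr_ge0 (_ : _ - _ = 2 * a ^+ 2 * (p' - p)).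
  by rewrite pmulr_rge0 ?subr_ge0 // mulr_gt0 // exprn_gt0.
by rewrite /slope; ring.
Qed.

Lemma slope_quadfix : slope P = 1 - s.
Proof. by rewrite -quadfix_shift /slope -/q; ring. Qed.

Lemma quadfix_le y : f y <= y -> P <= y.
Proof.
move=> fy_le; rewrite leNgt; apply/negP => yP.
have slope_lt1 : slope y < 1.
  have s_gt0 : 0 < s by rewrite /s sqrtr_gt0 quadmap_discr_gt0.
  by rewrite (le_lt_trans (slope_le _ _ (ltW yP))) // slope_quadfix; lra.
have : 0 < (P - y) * (1 - slope y) by rewrite mulr_gt0 // subr_gt0.
have := quadmap_sub_quadfix y; lra.
Qed.

Lemma quadmap_le p p' : 0 <= p <= p' -> f p <= f p'.
Proof.
move=> /andP[p_ge0 le_pp'].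
rewrite /quadmap ler_pM2l // ler_sqr ?nnegrE ?affine_ge0 ?(le_trans p_ge0) //.
by rewrite lerD2r ler_wpM2l // ltW.
Qed.

Lemma quadmap_half_lt : f (1 / 2) < 1 / 2.
Proof.
have t_ge0 : 0 <= a * (1 / 2) + b by apply: affine_ge0; lra.
have t_lt : a * (1 / 2) + b < 1 / 2 by move: a2b_lt1; lra.
by rewrite /quadmap; move: t_ge0 t_lt; nra.
Qed.

Lemma quadfix_lt_half : P < 1 / 2.
Proof.
rewrite lt_neqAle quadfix_le ?ltW ?quadmap_half_lt // andbT.
by apply/eqP => P_half; have := quadmap_half_lt; rewrite -P_half quadmap_quadfix ltxx.
Qed.

Lemma quadmap_contraction : exists2 c, 0 <= c < 1 &
  forall y, 0 <= y <= 1 / 2 -> `|f y - P| <= c * `|y - P|.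
Proof.
exists (slope (1 / 2)).
  apply/andP; split; first by apply: slope_ge0; lra.
  rewrite ltNge; apply/negP => slope_ge1.
  have : (1 / 2 - P) * 1 <= (1 / 2 - P) * slope (1 / 2).
    by rewrite ler_wpM2l // subr_ge0 ltW // quadfix_lt_half.
  have := quadmap_sub_quadfix (1 / 2); have := quadmap_half_lt; lra.
move=> y /andP[y_ge0 y_le].
rewrite quadmap_sub_quadfix normrM (ger0_norm (slope_ge0 _ y_ge0)) mulrC.
by apply: ler_wpM2r => //; apply: slope_le.
Qed.

Lemma quadmap_le_half y : 0 <= y <= 1 / 2 -> 0 <= f y <= 1 / 2.
Proof.
move=> y_in; rewrite /quadmap mulr_ge0 ?sqr_ge0 //=.
by rewrite (le_trans (quadmap_le _ _ y_in)) // ltW // quadmap_half_lt.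
Qed.

End QuadraticMap.

Lemma quadmap_iter_cvg (R : realType) (a b p : R) :
  0 < a -> 0 <= b -> a + 2 * b < 1 -> 0 <= p <= 1 / 2 ->
  iter n (quadmap a b) p @[n --> \oo] --> quadfix a b.
Proof.
move=> a_gt0 b_ge0 a2b_lt1.
have [c /andP[c_ge0 c_lt1] contract] := quadmap_contraction a_gt0 b_ge0 a2b_lt1.
exact: (iter_contract_cvg c_ge0 c_lt1 (quadmap_le_half a_gt0 b_ge0 a2b_lt1)).
Qed.

Lemma selfmapE (R : realType) (e x : R) : selfmap e x = quadmap (1 - e) (x * e).
Proof. by apply/funext => p; rewrite /selfmap /quadmap; ring. Qed.

Lemma pstarE (R : realType) (e x : R) : pstar e x = quadfix (1 - e) (x * e).
Proof.
rewrite /pstar /quadfix.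
by congr ((1 - _ - Num.sqrt (1 - _)) / _); ring.
Qed.

Lemma selfmap_e_le (R : realType) (e x : R) :
  0 < e < 1 -> 0 <= x < 1 / 2 -> selfmap e x e <= e.
Proof.
move=> /andP[e_gt0 e_lt1] /andP[x_ge0 x_lt].
rewrite /selfmap (_ : _ + _ = e * (2 * e * (1 - e + x) ^+ 2)); last by ring.
rewrite ger_pMr //.
(* [1 - 2 e (3/2 - e)^2 = (e - 1/2)^2 (4 - 2 e)] *)
have : 2 * e * (1 - e + x) ^+ 2 <= 2 * e * (3 / 2 - e) ^+ 2.
  by rewrite ler_wpM2l ?ler_sqr ?nnegrE; lra.
have : 0 <= (e - 1 / 2) ^+ 2 * (4 - 2 * e) by rewrite mulr_ge0 ?sqr_ge0 //; lra.
lra.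
Qed.

Theorem mainTheorem10 (R : realType) (e x : R)
  (he0 : 0 < e) (he1 : e < 1) (hx0 : 0 <= x) (hx1 : x < 1 / 2) :
  (forall p : R, 0 <= p -> p <= 1 / 2 ->
     (fun n : nat => iter n (selfmap e x) p) @ \oo --> pstar e x)
  /\ pstar e x <= e.
Proof.
have a_gt0 : 0 < 1 - e by lra.
have b_ge0 : 0 <= x * e by rewrite mulr_ge0 // ltW.
have a2b_lt1 : 1 - e + 2 * (x * e) < 1 by nra.
split=> [p p_ge0 p_le|].
  by rewrite selfmapE pstarE; apply: quadmap_iter_cvg => //; rewrite p_ge0 p_le.
rewrite pstarE; apply: (quadfix_le a_gt0 b_ge0 a2b_lt1).
by rewrite -selfmapE selfmap_e_le ?he0 ?he1 ?hx0 ?hx1.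
Qed.
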